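(* Let $\mathbf{P}=[\mathbf{Q}_1\ \mathbf{Q}_2]\in\mathbb{R}^{n\times d}$ with $\mathbf{Q}_1\in\mathbb{R}^{n\times d'}$, $\mathbf{Q}_2\in\mathbb{R}^{n\times d''}$, $d=d'+d''$. If one of $\mathbf{Q}_1,\mathbf{Q}_2$ is (sufficiently) node-identifying, then $\mathbf{P}$ is (sufficiently) node-identifying. If one of $\mathbf{Q}_1,\mathbf{Q}_2$ is (sufficiently) adjacency-identifying, then $\mathbf{P}$ is (sufficiently) adjacency-identifying. If $\mathbf{Q}_1$ is (sufficiently) node-identifying and $\mathbf{Q}_2$ is (sufficiently) adjacency-identifying, or vice versa, then $\mathbf{P}$ is (sufficiently) node- and adjacency-identifying.
   Context: $G$ is a graph with $n$ nodes and adjacency matrix $\mathbf{A}(G)$; $d_k>0$ is a fixed constant. A matrix $\mathbf{R}\in\mathbb{R}^{n\times e}$ is node-identifying if there exist $\mathbf{W}^Q,\mathbf{W}^K\in\mathbb{R}^{e\times e}$ such that $\tilde{\mathbf{R}}=\frac{1}{\sqrt{d_k}}\mathbf{R}\mathbf{W}^Q(\mathbf{R}\mathbf{W}^K)^T$ satisfies $\tilde{\mathbf{R}}_{ij}=\max_k\tilde{\mathbf{R}}_{ik}\iff i=j$; adjacency-identifying if for some such matrices $\tilde{\mathbf{R}}_{ij}=\max_k\tilde{\mathbf{R}}_{ik}\iff\mathbf{A}(G)_{ij}=1$; node- and adjacency-identifying if it is both (possibly with different projection matrices). A matrix depending on learnable parameters is sufficiently node-identifying (resp. adjacency-identifying)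 if there is a node-identifying (resp. adjacency-identifying) matrix $\mathbf{R}^*$ such that for every $\varepsilon>0$ some parameter choice makes it lie within Frobenius distance $\varepsilon$ of $\mathbf{R}^*$. The parenthetical ''(sufficiently)'' is to be read consistently throughout each sentence: either all occurrences or none. *)

From HB Require Import structures.
From mathcomp Require Import all_boot all_order all_algebra.
From mathcomp Require Import reals.
Set Implicit Arguments. Unset Strict Implicit. Unset Printing Implicit Defensive.
Import Order.TTheory GRing.Theory Num.Theory.
Local Open Scope ring_scope.

Section Defs.
Variable R : realType.

Definition adjmx (n : nat) (G : rel 'I_n) : 'M[R]_n :=
  \matrix_(i, j) (G i j)%:R.

Definition attn_scores (dk : R) (n e : nat) (X : 'M[R]_(n, e))
  (WQ WK : 'M[R]_e) : 'M[R]_n :=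
  (Num.sqrt dk)^-1 *: ((X *m WQ) *m (X *m WK)^T).

Definition is_row_max (n : nat) (M : 'M[R]_n) (i j : 'I_n) : Prop :=
  forall k : 'I_n, M i k <= M i j.

Definition node_identifying (dk : R) (n e : nat) (X : 'M[R]_(n, e)) : Prop :=
  exists WQ WK : 'M[R]_e, forall i j : 'I_n,
    is_row_max (attn_scores dk X WQ WK) i j <-> i = j.

Definition adjacency_identifying (dk : R) (n : nat) (G : rel 'I_n) (e : nat)
  (X : 'M[R]_(n, e)) : Prop :=
  exists WQ WK : 'M[R]_e, forall i j : 'I_n,
    is_row_max (attn_scores dk X WQ WK) i j <-> adjmx G i j = 1.

(* both, possibly with different projection matrices *)
Definition node_adjacency_identifying (dk : R) (n : nat) (G : rel 'I_n)
  (e : nat) (X : 'M[R]_(n, e)) : Prop :=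
  node_identifying dk X /\ adjacency_identifying dk G X.

Definition frobenius_norm (m p : nat) (M : 'M[R]_(m, p)) : R :=
  Num.sqrt (\sum_(i < m) \sum_(j < p) M i j ^+ 2).

Definition sufficiently (Theta : Type) (n e : nat)
  (Ident : 'M[R]_(n, e) -> Prop) (X : Theta -> 'M[R]_(n, e)) : Prop :=
  exists Rstar : 'M[R]_(n, e), Ident Rstar /\
    forall eps : R, 0 < eps ->
      exists th : Theta, frobenius_norm (X th - Rstar) < eps.

End Defs.

From HB Require Import structures.
From mathcomp Require Import all_boot all_order all_algebra.
From mathcomp Require Import reals.
Import Order.TTheory GRing.Theory Num.Theory.
Local Open Scope ring_scope.
Set Implicit Arguments. Unset Strict Implicit. Unset Printing Implicit Defensive.

(* Padding the projections of one block with zeros makes the attention scores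
   of [Q1 Q2] equal to those of that block, so every identifying property of a
   block passes to the concatenation; the node- and adjacency-identifying
   halves may use different projections, hence the mixed case.  For the
   "sufficiently" versions, approximants of the two blocks concatenate, as the
   Frobenius norm of [A B] is at most the sum of the norms of A and B; a block
   with no requirement is approximated by itself. *)

Section Frobenius.
Variable R : realType.

Lemma sqrtrD_le (a b : R) : 0 <= a -> 0 <= b ->
  Num.sqrt (a + b) <= Num.sqrt a + Num.sqrt b.
Proof.
move=> a_ge0 b_ge0.
have sum_ge0 : 0 <= Num.sqrt a + Num.sqrt b by rewrite addr_ge0 ?sqrtr_ge0.
rewrite -[leRHS]ger0_norm // -sqrtr_sqr ler_sqrt ?sqr_ge0 //.
rewrite sqrrD !sqr_sqrtr // -addrA lerD2l lerDr.
by rewrite mulrn_wge0 // mulr_ge0 ?sqrtr_ge0.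
Qed.

Lemma frobenius_norm_row_mx m p1 p2 (A : 'M[R]_(m, p1)) (B : 'M[R]_(m, p2)) :
  frobenius_norm (row_mx A B) <= frobenius_norm A + frobenius_norm B.
Proof.
have sqsum_ge0 p (M : 'M[R]_(m, p)) : 0 <= \sum_i \sum_j M i j ^+ 2.
  by apply: sumr_ge0 => i _; apply: sumr_ge0 => j _; apply: sqr_ge0.
rewrite /frobenius_norm.
have -> : \sum_i \sum_j row_mx A B i j ^+ 2 =
          \sum_i \sum_j A i j ^+ 2 + \sum_i \sum_j B i j ^+ 2.
  rewrite -big_split; apply: eq_bigr => i _; rewrite big_split_ord /=.
  by congr (_ + _); apply: eq_bigr => j _; rewrite ?row_mxEl ?row_mxEr.
exact: sqrtrD_le (sqsum_ge0 _ A) (sqsum_ge0 _ B).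
Qed.

Lemma frobenius_norm0 m p : frobenius_norm (0 : 'M[R]_(m, p)) = 0.
Proof.
rewrite /frobenius_norm big1 ?sqrtr0 // => i _.
by rewrite big1 // => j _; rewrite mxE expr0n.
Qed.

End Frobenius.

Section Scores.
Variables (R : realType) (dk : R) (n d1 d2 : nat).
Variables (Q1 : 'M[R]_(n, d1)) (Q2 : 'M[R]_(n, d2)).

Definition scores_identify e (X : 'M[R]_(n, e)) (P : 'I_n -> 'I_n -> Prop) :=
  exists WQ WK : 'M[R]_e, forall i j : 'I_n,
    is_row_max (attn_scores dk X WQ WK) i j <-> P i j.

Lemma attn_scores_row_mx_blockl (WQ WK : 'M[R]_d1) :
  attn_scores dk (row_mx Q1 Q2) (block_mx WQ 0 0 0) (block_mx WK 0 0 0)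
  = attn_scores dk Q1 WQ WK.
Proof.
rewrite /attn_scores !mul_row_block !mulmx0 !addr0 tr_row_mx mul_row_col.
by rewrite trmx0 mulmx0 addr0.
Qed.

Lemma attn_scores_row_mx_blockr (WQ WK : 'M[R]_d2) :
  attn_scores dk (row_mx Q1 Q2) (block_mx 0 0 0 WQ) (block_mx 0 0 0 WK)
  = attn_scores dk Q2 WQ WK.
Proof.
rewrite /attn_scores !mul_row_block !mulmx0 !add0r tr_row_mx mul_row_col.
by rewrite trmx0 mulmx0 add0r.
Qed.

Lemma scores_identify_row_mx P :
  scores_identify Q1 P \/ scores_identify Q2 P ->
  scores_identify (row_mx Q1 Q2) P.
Proof.
case=> -[WQ [WK identWQK]].
  exists (block_mx WQ 0 0 0), (block_mx WK 0 0 0).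
  by rewrite attn_scores_row_mx_blockl.
exists (block_mx 0 0 0 WQ), (block_mx 0 0 0 WK).
by rewrite attn_scores_row_mx_blockr.
Qed.

Lemma node_identifying_row_mx :
  node_identifying dk Q1 \/ node_identifying dk Q2 ->
  node_identifying dk (row_mx Q1 Q2).
Proof. exact: scores_identify_row_mx. Qed.

Lemma adjacency_identifying_row_mx (G : rel 'I_n) :
  adjacency_identifying dk G Q1 \/ adjacency_identifying dk G Q2 ->
  adjacency_identifying dk G (row_mx Q1 Q2).
Proof. exact: scores_identify_row_mx. Qed.

Lemma node_adjacency_identifying_row_mx (G : rel 'I_n) :
  (node_identifying dk Q1 /\ adjacency_identifying dk G Q2) \/
  (adjacency_identifying dk G Q1 /\ node_identifying dk Q2) ->
  node_adjacency_identifying dk G (row_mx Q1 Q2).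
Proof.
case=> -[ident1 ident2]; split.
- by apply: node_identifying_row_mx; left.
- by apply: adjacency_identifying_row_mx; right.
- by apply: node_identifying_row_mx; right.
- by apply: adjacency_identifying_row_mx; left.
Qed.

End Scores.

Lemma sufficiently_eq_value (R : realType) (T : Type) n e
  (Q : T -> 'M[R]_(n, e)) (t : T) :
  sufficiently (fun M => M = Q t) Q.
Proof.
exists (Q t); split => // eps eps_gt0.
by exists t; rewrite subrr frobenius_norm0.
Qed.

Section Sufficiently.
Variables (R : realType) (n d1 d2 : nat) (T1 T2 : Type).
Variables (Q1 : T1 -> 'M[R]_(n, d1)) (Q2 : T2 -> 'M[R]_(n, d2)).
Variable I : 'M[R]_(n, d1 + d2) -> Prop.

Let P (th : T1 * T2) := row_mx (Q1 th.1) (Q2 th.2).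

Lemma sufficiently_row_mx I1 I2 :
  (forall A B, I1 A -> I2 B -> I (row_mx A B)) ->
  sufficiently I1 Q1 -> sufficiently I2 Q2 -> sufficiently I P.
Proof.
move=> identI [R1 [ident1 approx1]] [R2 [ident2 approx2]].
exists (row_mx R1 R2); split; first exact: identI.
move=> eps eps_gt0; have eps2_gt0 : 0 < eps / 2 by rewrite divr_gt0.
have [th1 close1] := approx1 _ eps2_gt0.
have [th2 close2] := approx2 _ eps2_gt0.
exists (th1, th2); rewrite /P /= opp_row_mx add_row_mx.
apply: le_lt_trans (frobenius_norm_row_mx _ _) _.
by rewrite [eps]splitr ltrD.
Qed.

Lemma sufficiently_row_mxl I1 (t2 : T2) :
  (forall A B, I1 A -> I (row_mx A B)) ->
  sufficiently I1 Q1 -> sufficiently I P.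
Proof.
move=> identI suff1.
apply: sufficiently_row_mx suff1 (sufficiently_eq_value Q2 t2).
by move=> A B /identI.
Qed.

Lemma sufficiently_row_mxr I2 (t1 : T1) :
  (forall A B, I2 B -> I (row_mx A B)) ->
  sufficiently I2 Q2 -> sufficiently I P.
Proof.
move=> identI; apply: sufficiently_row_mx (sufficiently_eq_value Q1 t1).
by move=> A B _ /identI.
Qed.

End Sufficiently.

Theorem lemmaF11 (R : realType) (dk : R) (hdk : 0 < dk)
  (n : nat) (G : rel 'I_n) (d1 d2 : nat) :
  (* plain version: fixed matrices Q1, Q2, P = [Q1 Q2] *)
  (forall (Q1 : 'M[R]_(n, d1)) (Q2 : 'M[R]_(n, d2)),
     ((node_identifying dk Q1 \/ node_identifying dk Q2) ->
        node_identifying dk (row_mx Q1 Q2)) /\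
     ((adjacency_identifying dk G Q1 \/ adjacency_identifying dk G Q2) ->
        adjacency_identifying dk G (row_mx Q1 Q2)) /\
     ((node_identifying dk Q1 /\ adjacency_identifying dk G Q2) \/
      (adjacency_identifying dk G Q1 /\ node_identifying dk Q2) ->
        node_adjacency_identifying dk G (row_mx Q1 Q2))) /\
  (* "sufficiently" version: Q1, Q2 depend on (independent, nonempty)
     learnable parameters, P depends on both *)
  (forall (Theta1 Theta2 : Type) (th1 : Theta1) (th2 : Theta2)
          (Q1 : Theta1 -> 'M[R]_(n, d1)) (Q2 : Theta2 -> 'M[R]_(n, d2)),
     let P := fun th : Theta1 * Theta2 => row_mx (Q1 th.1) (Q2 th.2) in
     ((sufficiently (@node_identifying R dk n d1) Q1 \/
       sufficiently (@node_identifying R dk n d2) Q2) ->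
        sufficiently (@node_identifying R dk n (d1 + d2)) P) /\
     ((sufficiently (@adjacency_identifying R dk n G d1) Q1 \/
       sufficiently (@adjacency_identifying R dk n G d2) Q2) ->
        sufficiently (@adjacency_identifying R dk n G (d1 + d2)) P) /\
     ((sufficiently (@node_identifying R dk n d1) Q1 /\
       sufficiently (@adjacency_identifying R dk n G d2) Q2) \/
      (sufficiently (@adjacency_identifying R dk n G d1) Q1 /\
       sufficiently (@node_identifying R dk n d2) Q2) ->
        sufficiently (@node_adjacency_identifying R dk n G (d1 + d2)) P)).
Proof.
split=> [Q1 Q2 | T1 T2 t1 t2 Q1 Q2 P].
  split; first exact: node_identifying_row_mx.
  split; first exact: adjacency_identifying_row_mx.
  exact: node_adjacency_identifying_row_mx.
split; [|split].
- case=> [suff1|suff2].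
    apply: sufficiently_row_mxl t2 _ suff1 => A B identA.
    by apply: node_identifying_row_mx; left.
  apply: sufficiently_row_mxr t1 _ suff2 => A B identB.
  by apply: node_identifying_row_mx; right.
- case=> [suff1|suff2].
    apply: sufficiently_row_mxl t2 _ suff1 => A B identA.
    by apply: adjacency_identifying_row_mx; left.
  apply: sufficiently_row_mxr t1 _ suff2 => A B identB.
  by apply: adjacency_identifying_row_mx; right.
- case=> -[suff1 suff2];
    apply: sufficiently_row_mx suff1 suff2 => A B identA identB;
    apply: node_adjacency_identifying_row_mx; by [left | right].
Qed.
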